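(* Consider the fully discrete blended (GT) scheme \[ u^{n+1}_k=u^n_k+\lambda\big(f_{\alpha_{k-\frac12}}-f_{\alpha_{k+\frac12}}\big),\qquad f_{\alpha_{k+\frac12}}=\alpha_{k+\frac12}g_{k+\frac12}+(1-\alpha_{k+\frac12})h_{k+\frac12},\quad \alpha_{k+\frac12}\in[0,1], \] with $\lambda=\Delta t/\Delta x$, where $g$ is an entropy stable (discretely entropy dissipative) numerical flux with numerical entropy flux $G$ and $h$ is an entropy conservative numerical flux (possibly with a stencil of more than two points) with numerical entropy flux $H$, for a convex entropy $U$ with entropy flux $F$. Suppose that $\alpha_{k+\frac12}$ and $\alpha_{k-\frac12}$ satisfy Condition $F$ for cell $k$ (at both cell boundaries), and that the time step obeys a CFL restriction equal to half of the minimum of the CFL restrictions of the two fluxes. Then the scheme satisfies the discrete per-cell entropy inequality \[ U(u^{n+1}_k)-U(u^n_k)+\lambda\big(F^{\mathrm{num}}_{k+\frac12}-F^{\mathrm{num}}_{k-\frac12}\big)\le 0 \] with numerical entropy flux $F^{\mathrm{num}}_{k+\frac12}=\alpha_{k+\frac12}G_{k+\frac12}+(1-\alpha_{k+\frac12})H_{k+\frac12}$.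
   Context: Setting: one-dimensional finite volume method for $\partial_t u+\partial_x f(u)=0$ on a uniform mesh, cell averages $u^n_k$; $g_{k+\frac12}$, $h_{k+\frac12}$, $G_{k+\frac12}$, $H_{k+\frac12}$ denote the respective numerical (entropy) fluxes evaluated at time level $n$ on their stencils around the interface $x_{k+\frac12}$. Define the half-cell entropy productions $s^n_{k+\frac14}=U\big(u^n_k+2\lambda(f(u^n_k)-g_{k+\frac12})\big)-U(u^n_k)+2\lambda\big(G_{k+\frac12}-F(u^n_k)\big)$, $s^n_{k-\frac14}=U\big(u^n_k+2\lambda(g_{k-\frac12}-f(u^n_k))\big)-U(u^n_k)+2\lambda\big(F(u^n_k)-G_{k-\frac12}\big)$, and $p^n_{k\pm\frac14}$ the same expressions with $g,G$ replaced by $h,H$. Condition $F$ for cell $k$ means $\alpha_{k+\frac12}s^n_{k+\frac14}+(1-\alpha_{k+\frac12})p^n_{k+\frac14}\le0$ and $\alpha_{k-\frac12}s^n_{k-\frac14}+(1-\alpha_{k-\frac12})p^n_{k-\frac14}\le0$. *)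

(* States are row vectors 'rV[R]_m (m = 1: scalar law). *)
From mathcomp Require Import all_boot all_order all_algebra.
Set Implicit Arguments. Unset Strict Implicit. Unset Printing Implicit Defensive.
Import Order.TTheory GRing.Theory Num.Theory.
Local Open Scope ring_scope.

(* Convention: quantities indexed by an interface use the integer j for
   x_{j+1/2}; so g k = g_{k+1/2} and g (k-1) = g_{k-1/2}.
   u : int -> 'rV_m are the cell averages u^n_k at time level n. *)

Definition convex_on (R : realFieldType) (m : nat)
    (Omega : 'rV[R]_m -> Prop) (U : 'rV[R]_m -> R) : Prop :=
  forall x y : 'rV[R]_m, Omega x -> Omega y ->
  forall t : R, 0 <= t <= 1 ->
    Omega (t *: x + (1 - t) *: y) /\
    U (t *: x + (1 - t) *: y) <= t * U x + (1 - t) * U y.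

Definition blended_flux (R : realFieldType) (m : nat)
    (alpha : int -> R) (g h : int -> 'rV[R]_m) (j : int) : 'rV[R]_m :=
  alpha j *: g j + (1 - alpha j) *: h j.

Definition blended_eflux (R : realFieldType)
    (alpha : int -> R) (G H : int -> R) (j : int) : R :=
  alpha j * G j + (1 - alpha j) * H j.

Definition gt_update (R : realFieldType) (m : nat) (lam : R)
    (alpha : int -> R) (g h : int -> 'rV[R]_m) (u : int -> 'rV[R]_m) (k : int)
    : 'rV[R]_m :=
  u k + lam *: (blended_flux alpha g h (k - 1) - blended_flux alpha g h k).

(* half-cell states entering s^n_{k+1/4} and s^n_{k-1/4} (with g:=h for p) *)
Definition half_state_plus (R : realFieldType) (m : nat) (lam : R)
    (f : 'rV[R]_m -> 'rV[R]_m) (g : int -> 'rV[R]_m) (u : int -> 'rV[R]_m)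
    (k : int) : 'rV[R]_m :=
  u k + (2 * lam) *: (f (u k) - g k).

Definition half_state_minus (R : realFieldType) (m : nat) (lam : R)
    (f : 'rV[R]_m -> 'rV[R]_m) (g : int -> 'rV[R]_m) (u : int -> 'rV[R]_m)
    (k : int) : 'rV[R]_m :=
  u k + (2 * lam) *: (g (k - 1) - f (u k)).

(* s^n_{k+1/4} (and p^n_{k+1/4} when applied to h, H) *)
Definition prod_plus (R : realFieldType) (m : nat) (lam : R)
    (f : 'rV[R]_m -> 'rV[R]_m) (U F : 'rV[R]_m -> R)
    (g : int -> 'rV[R]_m) (G : int -> R) (u : int -> 'rV[R]_m) (k : int) : R :=
  U (half_state_plus lam f g u k) - U (u k) + 2 * lam * (G k - F (u k)).

Definition prod_minus (R : realFieldType) (m : nat) (lam : R)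
    (f : 'rV[R]_m -> 'rV[R]_m) (U F : 'rV[R]_m -> R)
    (g : int -> 'rV[R]_m) (G : int -> R) (u : int -> 'rV[R]_m) (k : int) : R :=
  U (half_state_minus lam f g u k) - U (u k) + 2 * lam * (F (u k) - G (k - 1)).

Definition conditionF (R : realFieldType) (m : nat) (lam : R)
    (f : 'rV[R]_m -> 'rV[R]_m) (U F : 'rV[R]_m -> R)
    (g h : int -> 'rV[R]_m) (G H : int -> R) (alpha : int -> R)
    (u : int -> 'rV[R]_m) (k : int) : Prop :=
  alpha k * prod_plus lam f U F g G u k
    + (1 - alpha k) * prod_plus lam f U F h H u k <= 0 /\
  alpha (k - 1) * prod_minus lam f U F g G u k
    + (1 - alpha (k - 1)) * prod_minus lam f U F h H u k <= 0.

From mathcomp Require Import all_boot all_order all_algebra.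
From mathcomp Require Import ring lra.
Set Implicit Arguments. Unset Strict Implicit. Unset Printing Implicit Defensive.
Import Order.TTheory GRing.Theory Num.Theory.
Local Open Scope ring_scope.

(* The GT update is the average of two half-cell updates with doubled time
   step: u^{n+1}_k = 1/2 (alpha_{k-1/2} M_g + (1 - alpha_{k-1/2}) M_h)
   + 1/2 (alpha_{k+1/2} P_g + (1 - alpha_{k+1/2}) P_h), where P and M are the
   half-cell states of g and h.  Jensen's inequality for U bounds U(u^{n+1}_k)
   by the same average of the entropies of the half-cell states, and after
   adding the blended entropy-flux difference the right-hand side is exactly
   half the sum of the two blended half-cell productions of Condition F. *)

Lemma gt_update_half_states (R : realFieldType) (m : nat) (lam : R)
    (f : 'rV[R]_m -> 'rV[R]_m) (g h : int -> 'rV[R]_m) (alpha : int -> R)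
    (u : int -> 'rV[R]_m) (k : int) :
  gt_update lam alpha g h u k =
    2^-1 *: (alpha (k - 1) *: half_state_minus lam f g u k
             + (1 - alpha (k - 1)) *: half_state_minus lam f h u k)
  + 2^-1 *: (alpha k *: half_state_plus lam f g u k
             + (1 - alpha k) *: half_state_plus lam f h u k).
Proof.
have two_neq0 : 2%:R != 0 :> R by rewrite pnatr_eq0.
apply/rowP => i; rewrite /gt_update /blended_flux /half_state_plus
  /half_state_minus !mxE.
by field.
Qed.

Lemma convex_on_half_blends (R : realFieldType) (m : nat)
    (Omega : 'rV[R]_m -> Prop) (U : 'rV[R]_m -> R) (x1 x2 y1 y2 : 'rV[R]_m)
    (s t : R) :
  convex_on Omega U ->
  Omega x1 -> Omega x2 -> Omega y1 -> Omega y2 ->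
  0 <= s <= 1 -> 0 <= t <= 1 ->
  U (2^-1 *: (s *: x1 + (1 - s) *: x2) + 2^-1 *: (t *: y1 + (1 - t) *: y2))
    <= 2^-1 * (s * U x1 + (1 - s) * U x2) + 2^-1 * (t * U y1 + (1 - t) * U y2).
Proof.
move=> cvxU Ox1 Ox2 Oy1 Oy2 s01 t01.
have [Ox Ux] := cvxU _ _ Ox1 Ox2 s s01.
have [Oy Uy] := cvxU _ _ Oy1 Oy2 t t01.
have half01 : 0 <= (2^-1 : R) <= 1 by lra.
have half_compl : 1 - 2^-1 = 2^-1 :> R by lra.
have [_ Uxy] := cvxU _ _ Ox Oy 2^-1 half01.
rewrite half_compl in Uxy; lra.
Qed.

Theorem theorem2p9 (R : realFieldType) (m : nat)
    (Omega : 'rV[R]_m -> Prop) (U F : 'rV[R]_m -> R)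
    (f : 'rV[R]_m -> 'rV[R]_m)
    (g h : int -> 'rV[R]_m) (G H : int -> R) (alpha : int -> R)
    (u : int -> 'rV[R]_m) (lam : R) (k : int) :
  0 < lam ->
  convex_on Omega U ->
  Omega (u k) ->
  (* the CFL restriction (half of the minimum of those of g and h):
     all half-cell states are admissible *)
  Omega (half_state_plus lam f g u k) ->
  Omega (half_state_plus lam f h u k) ->
  Omega (half_state_minus lam f g u k) ->
  Omega (half_state_minus lam f h u k) ->
  0 <= alpha k <= 1 -> 0 <= alpha (k - 1) <= 1 ->
  conditionF lam f U F g h G H alpha u k ->
  U (gt_update lam alpha g h u k) - U (u k)
    + lam * (blended_eflux alpha G H k - blended_eflux alpha G H (k - 1)) <= 0.
Proof.
move=> _ cvxU _ Opg Oph Omg Omh a01 b01 [prod_plus_le0 prod_minus_le0].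
have jensen := convex_on_half_blends cvxU Omg Omh Opg Oph b01 a01.
rewrite (gt_update_half_states _ f) /blended_eflux.
move: prod_plus_le0 prod_minus_le0; rewrite /prod_plus /prod_minus.
lra.
Qed.
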